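(* Let $L$ be a finite unramified extension of $\mathbb Q_\ell$ with ring of integers $S$, let $f_1\in S[t]$ be monic of degree $d_1$ with $f_1\equiv t^{d_1}\pmod\ell$, $R=S[t]/f_1S[t]$, $x$ the image of $t$. Let $T$ be an $R$-module that is free of finite rank over $S$, generated over $R$ by $r$ elements, with $\mathrm{Hp}(x|T)=(m_1,\dots,m_r)$, and let $f$ be the characteristic polynomial of $x$ on $T$. Then there exist $r\times r$ matrices $X,Y$ over $S[t]$ with $YX=f_1\cdot I_r$ and $\det X=f$ such that $T$ has the presentation $S[t]^r\xrightarrow{X}S[t]^r\to T\to0$ and $X\equiv\mathrm{diag}(t^{m_1},\dots,t^{m_r})\pmod\ell$.
   Context: $\mathrm{Hp}(x|T)=(m_1,\dots,m_r)$ means that the nilpotent endomorphism of the $S/\ell S$-vector space $T/\ell T$ induced by $x$ has Jordan blocks of sizes $m_1\ge\dots\ge m_r$ (its Young polygon has vertices $(\sum_{j\le i}m_j,i)$). *)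

From HB Require Import structures.
From mathcomp Require Import all_boot all_order all_algebra.
Set Implicit Arguments. Unset Strict Implicit. Unset Printing Implicit Defensive.
Import Order.TTheory GRing.Theory Num.Theory.
Local Open Scope ring_scope.

Definition ldvd (S : comNzRingType) (l k : nat) (a : S) : Prop :=
  exists c : S, a = c * (l%:R ^+ k).

(* S is the ring of integers of a finite unramified extension L of Q_l, with
   residue field F = S / l S realised by the surjection pi with kernel l S:
   S is a domain of characteristic 0 (l <> 0 in S), every nonzero element is
   a unit times a power of l (DVR with uniformizer l, i.e. unramified),
   S is l-adically complete, and the residue field S/lS is finite. *)
Definition unram_int_ring (S : idomainType) (l : nat) (F : finFieldType)
    (pi : {rmorphism S -> F}) : Prop :=
  [/\ prime l, (l%:R : S) != 0 &
   [/\
      (forall a : S, a != 0 ->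
         exists k u, u \is a GRing.unit /\ a = u * l%:R ^+ k),
      (forall y : F, exists a : S, pi a = y),
      (forall a : S, pi a = 0 <-> ldvd l 1 a) &
      (forall s : nat -> S, (forall k, ldvd l k (s k.+1 - s k)) ->
         exists b : S, forall k, ldvd l k (b - s k))]].

(* Action of a polynomial p in x on a vector v of T = S^n (row vectors),
   where x acts by v |-> v *m A:  v . p(x) = sum_i p_i (v A^i). *)
Definition pact (S : comNzRingType) (n : nat) (A : 'M[S]_n)
    (v : 'rV[S]_n) (p : {poly S}) : 'rV[S]_n :=
  \sum_(i < size p) p`_i *: (v *m A ^+ i).

Definition block_start (r : nat) (m : 'I_r -> nat) (k : nat) : bool :=
  [exists s : 'I_r.+1, k == (\sum_(i < r | (i < s)%N) m i)%N].

Definition nilJordan (F : nzRingType) (r n : nat) (m : 'I_r -> nat)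
    : 'M[F]_n :=
  \matrix_(i < n, j < n) ((j == i.+1 :> nat) && ~~ block_start m j)%:R.

(* Hp(N) = (m_1,...,m_r): N is similar to the nilpotent Jordan matrix with
   blocks of sizes m_1 >= ... >= m_r (zero sizes allowed as padding). *)
Definition Hp (F : fieldType) (n r : nat) (N : 'M[F]_n) (m : 'I_r -> nat)
    : Prop :=
  [/\ (forall i j : 'I_r, (i <= j)%N -> (m j <= m i)%N),
      (\sum_(i < r) m i)%N = n &
      exists P : 'M[F]_n, P \in unitmx /\ P *m N *m invmx P = @nilJordan F r n m].

From HB Require Import structures.
From mathcomp Require Import all_boot all_order all_algebra zify.
Set Implicit Arguments. Unset Strict Implicit. Unset Printing Implicit Defensive.
Import GRing.Theory.
Local Open Scope ring_scope.

(* Choose P over S/lS conjugating x to its Jordan form; its rows form Jordan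
   chains of lengths m_i. Lift the first row of each chain to some w_i over S and
   replace the others by w_i x^j: the resulting matrix B reduces to P, so its
   determinant is a unit mod l, hence a unit, and (w_i x^j)_{j < m_i} is a basis
   of T = S^n. Column i of X expresses w_i t^(m_i) in this basis. Reducing by
   these columns brings every q in S[t]^r to entries of degrees < m_i, where the
   map to T is injective, so X presents T; X = diag(t^(m_i)) mod l because
   w_i x^(m_i) = 0 mod l. In the basis B, x is block companion, and a block
   determinant computation gives det X = char_poly x. Since f1 kills T,
   f1 I = X Y for some Y, whence Y X = f1 I as det X != 0. *)

Section PolyAction.
Variables (S : comNzRingType) (n : nat) (A : 'M[S]_n).

Lemma pact_horner n' (A' : 'M[S]_n'.+1) v p : pact A' v p = v *m horner_mx A' p.
Proof.
have {2}-> : p = \sum_(i < size p) p`_i *: 'X^i by rewrite -poly_def coefK.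
rewrite /pact linear_sum /= mulmx_sumr; apply: eq_bigr => i _.
by rewrite linearZ /= rmorphXn /= horner_mx_X scalemxAr.
Qed.

Lemma pactD v p q : pact A v (p + q) = pact A v p + pact A v q.
Proof.
case: n A v => [|n'] A' v; first by rewrite !thinmx0.
by rewrite !pact_horner rmorphD mulmxDr.
Qed.

Lemma pactM v p q : pact A v (p * q) = pact A (pact A v p) q.
Proof.
case: n A v => [|n'] A' v; first by rewrite !thinmx0.
by rewrite !pact_horner rmorphM mulmxA.
Qed.

Lemma pactC v c : pact A v c%:P = c *: v.
Proof.
case: n A v => [|n'] A' v; first by rewrite !thinmx0.
by rewrite !pact_horner horner_mx_C mul_mx_scalar.
Qed.

Lemma pactXn v j : pact A v 'X^j = v *m A ^+ j.
Proof.
case: n A v => [|n'] A' v; first by rewrite !thinmx0.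
by rewrite !pact_horner rmorphXn /= horner_mx_X.
Qed.

Lemma pact0 v : pact A v 0 = 0.
Proof. by rewrite /pact size_poly0 big_ord0. Qed.

Lemma pactN v p : pact A v (- p) = - pact A v p.
Proof.
case: n A v => [|n'] A' v; first by rewrite !thinmx0.
by rewrite !pact_horner rmorphN mulmxN.
Qed.

Lemma pact_sum v I (s : seq I) (P : pred I) (F : I -> {poly S}) :
  pact A v (\sum_(i <- s | P i) F i) = \sum_(i <- s | P i) pact A v (F i).
Proof. by elim/big_rec2: _ => [|i x y _ <-]; rewrite ?pact0 ?pactD. Qed.

Lemma pactDv u w p : pact A (u + w) p = pact A u p + pact A w p.
Proof.
by rewrite /pact -big_split; apply: eq_bigr => i _; rewrite mulmxDl scalerDr.
Qed.

Lemma pactZv c u p : pact A (c *: u) p = c *: pact A u p.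
Proof.
rewrite /pact scaler_sumr; apply: eq_bigr => i _.
by rewrite -scalemxAl !scalerA mulrC.
Qed.

Lemma pact0v p : pact A 0 p = 0.
Proof. by rewrite /pact big1 // => i _; rewrite mul0mx scaler0. Qed.

Lemma pact_sumv p I (s : seq I) (P : pred I) (F : I -> 'rV_n) :
  pact A (\sum_(i <- s | P i) F i) p = \sum_(i <- s | P i) pact A (F i) p.
Proof. by elim/big_rec2: _ => [|i x y _ <-]; rewrite ?pact0v ?pactDv. Qed.

Lemma pactCM v c p : pact A v (c%:P * p) = c *: pact A v p.
Proof. by rewrite pactM pactC pactZv. Qed.

Lemma pact_natM v (b : bool) p : pact A v (b%:R * p) = b%:R *: pact A v p.
Proof. by case: b; rewrite ?mul1r ?mul0r ?scale1r ?scale0r ?pact0. Qed.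

End PolyAction.

Section Blocks.
Variables (r : nat) (m : 'I_r -> nat).

Definition block_offset (k : nat) : nat := (\sum_(i < r | (i < k)%N) m i)%N.

Definition in_block (i : 'I_r) (b : nat) : bool :=
  (block_offset i <= b < block_offset i + m i)%N.

Lemma big_ord_ltS (R : nmodType) (G : 'I_r -> R) k (hk : (k < r)%N) :
  \sum_(i < r | (i < k.+1)%N) G i = \sum_(i < r | (i < k)%N) G i + G (Ordinal hk).
Proof.
rewrite (bigD1 (Ordinal hk)) //= addrC; congr (_ + _).
by apply: eq_bigl => j; rewrite ltnS -val_eqE /= andbC -ltn_neqAle.
Qed.

Lemma block_offset0 : block_offset 0 = 0%N.
Proof. by rewrite /block_offset big_pred0. Qed.

Lemma block_offsetS (i : 'I_r) : block_offset i.+1 = (block_offset i + m i)%N.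
Proof. by rewrite /block_offset (big_ord_ltS _ (ltn_ord i)); congr (_ + m _); apply: val_inj. Qed.

Lemma block_offset_ge k : (r <= k)%N -> block_offset k = (\sum_(i < r) m i)%N.
Proof. by move=> h; apply: eq_bigl => i; rewrite (leq_trans (ltn_ord i) h). Qed.

Lemma leq_block_offset : {homo block_offset : k k' / (k <= k')%N}.
Proof.
move=> k k' h; rewrite /block_offset [leqRHS](bigID (fun i : 'I_r => (i < k)%N)) /=.
apply: leq_trans (leq_addr _ _); rewrite eq_leq //; apply: eq_bigl => i.
by case hi: (i < k)%N; rewrite ?andbF // (leq_trans hi h).
Qed.

Lemma block_offset_le_sum k : (block_offset k <= \sum_(i < r) m i)%N.
Proof.
case: (leqP k r) => h; last by rewrite block_offset_ge // ltnW.
by rewrite -(block_offset_ge (leqnn r)) leq_block_offset.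
Qed.

Lemma block_start_offset k : (k <= r)%N -> block_start m (block_offset k).
Proof. by move=> h; apply/existsP; exists (Ordinal (h : (k < r.+1)%N)). Qed.

Lemma exists_block b : (b < \sum_(i < r) m i)%N -> exists i : 'I_r, in_block i b.
Proof.
rewrite -(block_offset_ge (leqnn r)).
suff: forall k, (k <= r)%N -> (b < block_offset k)%N -> exists i, in_block i b by apply.
elim=> [|k IH] hk; first by rewrite block_offset0.
case: (ltnP b (block_offset k)) => hbk; first by move=> _; apply: IH => //; apply: ltnW.
move=> hb'; exists (Ordinal hk); rewrite /in_block /= hbk.
by rewrite -(block_offsetS (Ordinal hk)).
Qed.

Lemma in_block_uniq (i i' : 'I_r) b : in_block i b -> in_block i' b -> i = i'.
Proof.
wlog lt : i i' / (i <= i')%N.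
  move=> W h1 h2; case: (leqP i i') => h; first exact: W.
  by apply/esym/W => //; apply: ltnW.
move=> /andP[h1 h2] /andP[h3 h4]; apply/val_inj/eqP; rewrite eqn_leq lt /=.
rewrite leqNgt; apply/negP => lt2.
have := leq_block_offset lt2; rewrite block_offsetS => /(leq_trans h2).
by rewrite ltnNge h3.
Qed.

Lemma not_block_start_inner (i : 'I_r) k :
  (block_offset i < k < block_offset i + m i)%N -> ~~ block_start m k.
Proof.
move=> /andP[h1 h2]; apply/existsP => -[s /eqP ks].
rewrite -/(block_offset s) in ks.
case: (leqP s i) => hs.
  by move: (leq_block_offset hs); rewrite -ks leqNgt h1.
by have := leq_block_offset hs; rewrite block_offsetS -ks leqNgt h2.
Qed.

Lemma block_start_succ k : (k < \sum_(i < r) m i)%N -> block_start m k.+1 ->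
  exists i : 'I_r, (0 < m i)%N /\ k.+1 = (block_offset i + m i)%N.
Proof.
move=> /exists_block[i /andP[h1 h2]] /existsP[s /eqP /= ks].
rewrite -/(block_offset s) in ks.
exists i; split; first by move: h2; case: (m i) => //; rewrite addn0 ltnNge h1.
apply/eqP; rewrite eqn_leq h2 /=.
case: (leqP s i) => hs.
  by have := leq_trans (leq_block_offset hs) h1; rewrite -ks ltnn.
by rewrite -block_offsetS ks leq_block_offset.
Qed.

Lemma sum_by_blocks (R : nmodType) (F : nat -> R) :
  \sum_(b < \sum_(i < r) m i) F b = \sum_(i < r) \sum_(j < m i) F (block_offset i + j)%N.
Proof.
suff: forall k, (k <= r)%N -> \sum_(b < block_offset k) F b =
   \sum_(i < r | (i < k)%N) \sum_(j < m i) F (block_offset i + j)%N.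
  by move=> /(_ r (leqnn r)); rewrite block_offset_ge // => ->; apply: eq_bigl => i; rewrite ltn_ord.
elim=> [|k IH] hk; first by rewrite block_offset0 big_ord0 big_pred0.
rewrite (block_offsetS (Ordinal hk)) (big_ord_ltS _ hk) -IH 1?ltnW //.
by rewrite big_split_ord.
Qed.

End Blocks.

Lemma row_select_mulmxE (R : pzRingType) m1 n1 p1 (f : 'I_m1 -> 'I_n1)
    (N : 'M[R]_(n1, p1)) i j :
  ((\matrix_(i, k) (k == f i)%:R) *m N) i j = N (f i) j.
Proof.
rewrite mxE (bigD1 (f i)) //= mxE eqxx mul1r big1 ?addr0 // => k hk.
by rewrite mxE (negbTE hk) mul0r.
Qed.

Lemma mulmx_col_selectE (R : pzRingType) m1 n1 p1 (g : 'I_p1 -> 'I_n1)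
    (N : 'M[R]_(m1, n1)) i j :
  (N *m (\matrix_(k, a) (k == g a)%:R)) i j = N i (g j).
Proof.
rewrite mxE (bigD1 (g j)) //= mxE eqxx mulr1 big1 ?addr0 // => k hk.
by rewrite mxE (negbTE hk) mulr0.
Qed.

Lemma char_poly_mxE (R : nzRingType) n (A : 'M[R]_n) i j :
  char_poly_mx A i j = 'X *+ (i == j) - (A i j)%:P.
Proof. by rewrite !mxE. Qed.

Lemma det_widen_identity (R : comNzRingType) r p (Hpr : (p <= r)%N) (A : 'M[R]_r) :
  (forall i j : 'I_r, (p <= i)%N || (p <= j)%N -> A i j = (i == j)%:R) ->
  \det A = \det (\matrix_(i < p, j < p) A (widen_ord Hpr i) (widen_ord Hpr j)).
Proof.
have [z ez] : exists z, r = (p + z)%N by exists (r - p)%N; rewrite subnKC.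
subst r => hA; rewrite -{1}[A]submxK.
have -> : dlsubmx A = 0.
  apply/matrixP => i j; rewrite !mxE hA /= ?leq_addr //.
  by rewrite -val_eqE /= gtn_eqF // (leq_trans (ltn_ord j)) ?leq_addr.
have -> : drsubmx A = 1%:M.
  by apply/matrixP => i j; rewrite !mxE hA /= ?leq_addr // -val_eqE /= eqn_add2l.
rewrite det_ublock det1 mulr1; congr (\det _); apply/matrixP => i j; rewrite !mxE.
by congr (A _ _); apply: val_inj.
Qed.

Lemma char_poly_conj (R : comUnitRingType) n (A B : 'M[R]_n) :
  B \in unitmx -> char_poly (B *m A *m invmx B) = char_poly A.
Proof.
move=> hB.
have e : char_poly_mx (B *m A *m invmx B) =
  map_mx polyC B *m char_poly_mx A *m map_mx polyC (invmx B).
  rewrite /char_poly_mx mulmxBr mulmxBl !map_mxM; congr (_ - _).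
  by rewrite scalar_mxC -mulmxA -map_mxM mulmxV // map_mx1 mulmx1.
rewrite /char_poly e !det_mulmx mulrAC -det_mulmx -map_mxM mulmxV //.
by rewrite map_mx1 det1 mul1r.
Qed.

Lemma row_nilJordan_mul (R : nzRingType) r n (m : 'I_r -> nat) (M : 'M[R]_n)
    (k k' : 'I_n) :
  k' = k.+1 :> nat -> ~~ block_start m k' -> row k (nilJordan R n m *m M) = row k' M.
Proof.
move=> ek hk; rewrite row_mul mulmx_sum_row (bigD1 k') //= big1 ?addr0 => [|j hj].
  by rewrite !mxE ek eqxx -ek hk scale1r.
by rewrite !mxE -ek val_eqE (negbTE hj) scale0r.
Qed.

Lemma row_nilJordan_mul_end (R : nzRingType) r n (m : 'I_r -> nat) (M : 'M[R]_n)
    (k : 'I_n) :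
  block_start m k.+1 -> row k (nilJordan R n m *m M) = 0.
Proof.
move=> hk; rewrite row_mul mulmx_sum_row big1 // => j _; rewrite !mxE.
by case: eqP => [->|]; rewrite ?hk scale0r.
Qed.

Definition ends_supported (R : nzRingType) r (m : 'I_r -> nat) n (C : 'M[R]_n) :=
  forall k : 'I_n, ~~ block_start m k.+1 -> forall j, C k j = 0.

Section BlockCompanion.
Variables (S : idomainType) (r : nat) (m : 'I_r -> nat) (p q : nat).
Hypothesis Hpr : (p <= r)%N.
Hypothesis Hpos : forall i : 'I_r, (i < p)%N = (0 < m i)%N.
Hypothesis Hsum : (\sum_(i < r) m i)%N = (p + q)%N.
Local Notation n := (p + q)%N.
Local Notation bs := (block_start m).
Local Notation boff := (block_offset m).
Local Notation J := (nilJordan S n m).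

Definition nz_block (i : 'I_p) : 'I_r := widen_ord Hpr i.

Lemma nz_block_gt0 (i : 'I_p) : (0 < m (nz_block i))%N.
Proof. by rewrite -Hpos /= ltn_ord. Qed.

Lemma nz_block_eq (i j : 'I_p) : (nz_block i == nz_block j) = (i == j).
Proof. by rewrite -!val_eqE. Qed.

Lemma block_last_lt (i : 'I_p) : ((boff i + m (nz_block i)).-1 < n)%N.
Proof.
rewrite -Hsum; have := block_offset_le_sum m i.+1; rewrite (block_offsetS m (nz_block i)) /=.
by have := nz_block_gt0 i; case: (m (nz_block i)) => // k _; rewrite addnS.
Qed.

Definition block_last (i : 'I_p) : 'I_n := Ordinal (block_last_lt i).

Lemma block_last_succ (i : 'I_p) : (block_last i).+1 = boff (nz_block i).+1.
Proof.
rewrite /= (block_offsetS m (nz_block i)).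
by have := nz_block_gt0 i; case: (m (nz_block i)) => // k _; rewrite addnS.
Qed.

Lemma in_block_last (i : 'I_p) (i' : 'I_r) : in_block m i' (block_last i) = (nz_block i == i').
Proof.
have h : in_block m (nz_block i) (block_last i).
  rewrite /in_block /=; have := nz_block_gt0 i; case: (m (nz_block i)) => // k _.
  by rewrite addnS /= leq_addr leqnn.
by apply/idP/eqP => [|<-] // h'; apply: in_block_uniq h h'.
Qed.

Lemma block_start_last_succ (i : 'I_p) : bs (block_last i).+1.
Proof. by rewrite block_last_succ block_start_offset. Qed.

Lemma exists_inner_enum : exists psi : 'I_q -> 'I_n,
  injective psi /\ forall a, ~~ bs (psi a).+1.
Proof.
pose inner := [set k : 'I_n | ~~ bs k.+1].
have hc : (#|~: inner| <= p)%N.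
  have : ~: inner \subset [set block_last i | i : 'I_p].
    apply/subsetP => k; rewrite !inE negbK => hk.
    have [|i [hi e]] := block_start_succ (k := k) _ hk; first by rewrite Hsum.
    have ip : (i < p)%N by rewrite Hpos.
    apply/imsetP; exists (Ordinal ip) => //; apply: val_inj; apply: succn_inj.
    by rewrite block_last_succ e -block_offsetS; congr (boff _.+1).
  move/subset_leq_card/leq_trans; apply.
  by rewrite (leq_trans (leq_imset_card _ _)) // card_ord.
have hq : (q <= #|inner|)%N.
  by have := cardsC inner; rewrite card_ord; lia.
have ha (a : 'I_q) : (a < size (enum inner))%N by rewrite -cardE (leq_trans (ltn_ord a)).
pose x0 (a : 'I_q) := widen_ord (leq_addl p q) a.
exists (fun a => nth (x0 a) (enum inner) a); split.
  move=> a b; rewrite (set_nth_default (x0 a) _ (ha b)) => /eqP.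
  by rewrite nth_uniq ?enum_uniq // => /eqP/val_inj.
by move=> a; have := mem_nth (x0 a) (ha a); rewrite mem_enum inE.
Qed.

Variable psi : 'I_q -> 'I_n.
Hypothesis psi_inj : injective psi.
Hypothesis psi_inner : forall a, ~~ bs (psi a).+1.

Lemma psi_succ_lt a : ((psi a).+1 < n)%N.
Proof.
rewrite ltn_neqAle ltn_ord andbT; apply: contraNneq (psi_inner a) => ->.
by rewrite -Hsum -(block_offset_ge m (leqnn r)) block_start_offset.
Qed.

Definition psi_succ a : 'I_n := Ordinal (psi_succ_lt a).

Lemma in_block_psi_succ a (i : 'I_r) : in_block m i (psi_succ a) = in_block m i (psi a).
Proof.
rewrite /in_block /=; apply/idP/idP => /andP[h1 h2].
  rewrite (ltnW h2) andbT; move: h1; rewrite leq_eqVlt => /orP[/eqP h1|] //.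
  by have := psi_inner a; rewrite -h1 block_start_offset // ltnW.
rewrite (leq_trans h1) //= ltn_neqAle h2 andbT; apply: contraNneq (psi_inner a) => ->.
by rewrite -block_offsetS block_start_offset.
Qed.

Definition chain_mx : 'M[{poly S}]_(n, p) :=
  \matrix_(k, i) ((in_block m (nz_block i) k)%:R * 'X^(k - boff (nz_block i))).
Definition block_pres_mx (C : 'M[S]_n) : 'M[{poly S}]_p :=
  \matrix_(i, i') ((i == i')%:R * 'X^(m (nz_block i)) -
                   \sum_(b < n) (C (block_last i) b)%:P * chain_mx b i').
Definition sel_last : 'M[{poly S}]_(p, n) := \matrix_(i, k) (k == block_last i)%:R.
Definition sel_inner : 'M[{poly S}]_(q, n) := \matrix_(a, k) (k == psi a)%:R.
Definition sel_succ : 'M[{poly S}]_(n, q) := \matrix_(k, a) (k == psi_succ a)%:R.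
Definition inner_block : 'M[{poly S}]_q :=
  \matrix_(a, b) ('X *+ (psi a == psi_succ b) - ((a == b)%:R)%:P).

Local Notation M C := (char_poly_mx (J + C)).

Lemma char_last_row C i k :
  M C (block_last i) k = 'X *+ (block_last i == k) - (C (block_last i) k)%:P.
Proof.
rewrite char_poly_mxE !mxE; congr (_ - _%:P).
by case: eqP => [->|]; rewrite ?block_start_last_succ ?andbF ?andFb add0r.
Qed.

Lemma char_inner_row C (HC : ends_supported m C) a k :
  M C (psi a) k = 'X *+ (psi a == k) - ((k == (psi a).+1 :> nat))%:R%:P.
Proof.
rewrite char_poly_mxE !mxE HC // addr0; congr (_ - _%:P).
by case: eqP => // ->; rewrite psi_inner.
Qed.

Lemma sum_delta_l (l : 'I_n) (f : 'I_n -> {poly S}) (c : {poly S}) :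
  \sum_(k < n) (c *+ (l == k)) * f k = c * f l.
Proof.
rewrite (bigD1 l) //= eqxx mulr1n big1 ?addr0 // => k hk.
by rewrite eq_sym (negbTE hk) mulr0n mul0r.
Qed.

Lemma sum_delta_r (l : 'I_n) (f : 'I_n -> {poly S}) :
  \sum_(k < n) ((k == l :> nat)%:R)%:P * f k = f l.
Proof.
rewrite (bigD1 l) //= eqxx mul1r big1 ?addr0 // => k hk.
by rewrite val_eqE (negbTE hk) mul0r.
Qed.

Lemma sel_last_char_chain C i j : (sel_last *m M C *m chain_mx) i j = block_pres_mx C i j.
Proof.
rewrite -mulmxA row_select_mulmxE mxE.
under eq_bigr do rewrite char_last_row mulrBl.
rewrite sumrB sum_delta_l [RHS]mxE; congr (_ - _).
rewrite mxE in_block_last nz_block_eq; case: eqP => [<-|_]; last by rewrite !mul0r mulr0.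
rewrite !mul1r /=; have := nz_block_gt0 i; case: (m (nz_block i)) => // k _.
by rewrite addnS /= addKn exprS.
Qed.

Lemma sel_inner_char_chain C (HC : ends_supported m C) a j :
  (sel_inner *m M C *m chain_mx) a j = 0.
Proof.
rewrite -mulmxA row_select_mulmxE mxE.
under eq_bigr do rewrite char_inner_row // mulrBl.
rewrite sumrB (sum_delta_l (psi a)) (sum_delta_r (psi_succ a)).
rewrite !mxE in_block_psi_succ.
case h: (in_block m (nz_block j) (psi a)); last by rewrite !mul0r mulr0 subrr.
by case/andP: h => h _; rewrite !mul1r /= subSn // exprS subrr.
Qed.

Lemma sel_inner_char_succ C (HC : ends_supported m C) a b :
  (sel_inner *m M C *m sel_succ) a b = inner_block a b.
Proof.
rewrite -mulmxA row_select_mulmxE mulmx_col_selectE char_inner_row // mxE.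
congr (_ - _%:P); rewrite /= eqSS val_eqE.
by rewrite (inj_eq psi_inj) eq_sym.
Qed.

Lemma det_char_sandwich C (HC : ends_supported m C) :
  \det (col_mx sel_last sel_inner) * char_poly (J + C) * \det (row_mx chain_mx sel_succ) =
  \det (block_pres_mx C) * \det inner_block.
Proof.
rewrite /char_poly -!det_mulmx mul_col_mx mul_col_row.
have -> : sel_inner *m M C *m chain_mx = 0.
  by apply/matrixP => a j; rewrite sel_inner_char_chain // mxE.
have -> : sel_last *m M C *m chain_mx = block_pres_mx C.
  by apply/matrixP => i j; rewrite sel_last_char_chain.
have -> : sel_inner *m M C *m sel_succ = inner_block.
  by apply/matrixP => a b; rewrite sel_inner_char_succ.
by rewrite det_ublock.
Qed.

Lemma char_poly_nilJordan : char_poly J = 'X^n.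
Proof.
rewrite /char_poly -det_tr det_trig.
  rewrite (eq_bigr (fun=> 'X)); first by rewrite prodr_const card_ord.
  by move=> i _; rewrite !mxE eqxx /= ltn_eqF // andFb subr0.
apply/is_trig_mxP => i j lt; rewrite !mxE -val_eqE (gtn_eqF lt) /=.
rewrite (_ : (i == j.+1 :> nat) = false) ?andFb ?subrr //.
by apply/negbTE; rewrite neq_ltn (ltn_trans lt) ?orbT.
Qed.

Lemma det_block_pres_mx0 : \det (block_pres_mx 0) = 'X^n.
Proof.
have sum_nz : (\sum_(i < p) m (nz_block i))%N = n.
  rewrite -Hsum (bigID (fun i : 'I_r => (i < p)%N)) /= (big_ord_narrow Hpr).
  by rewrite [X in (_ + X)%N]big1 ?addn0 // => i; rewrite Hpos lt0n negbK => /eqP.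
rewrite det_trig.
  transitivity ('X^(\sum_(i < p) m (nz_block i)) : {poly S}); last by rewrite sum_nz.
  rewrite -prodrXr; apply: eq_bigr => i _.
  by rewrite mxE eqxx mul1r big1 ?subr0 // => k _; rewrite mxE mul0r.
apply/is_trig_mxP => i j lt; rewrite mxE big1 ?subr0.
  by rewrite -val_eqE (ltn_eqF lt) mul0r.
by move=> k _; rewrite mxE mul0r.
Qed.

Lemma det_inner_block_neq0 : \det inner_block != 0.
Proof.
have := det_map_mx (horner_eval (0 : S)) inner_block.
have -> : map_mx (horner_eval 0) inner_block = - 1%:M.
  apply/matrixP => a b; rewrite !mxE horner_evalE hornerD hornerN hornerMn hornerX.
  by rewrite hornerC mul0rn add0r.
rewrite -scaleN1r detZ det1 mulr1 => e; apply: contraTneq isT => h.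
move: e; rewrite h rmorph0 => /esym/eqP.
by rewrite eq_sym expf_eq0 oppr_eq0 oner_eq0 andbF.
Qed.

(* Comparing with [C = 0], where both sides equal ['X^n], shows that the two
   outer determinants of the sandwich multiply to [\det inner_block != 0]. *)
Lemma char_poly_ends_supported C : ends_supported m C ->
  char_poly (J + C) = \det (block_pres_mx C).
Proof.
move=> HC; have HC0 : ends_supported m (0 : 'M[S]_n) by move=> k _ j; rewrite mxE.
have h0 := det_char_sandwich HC0.
rewrite addr0 char_poly_nilJordan det_block_pres_mx0 in h0.
have hX : 'X^n != 0 :> {poly S} by rewrite monic_neq0 ?monicXn.
set dP := \det (col_mx _ _) in h0 *; set dW := \det (row_mx _ _) in h0 *.
have e : dP * dW = \det inner_block.
  by apply: (mulfI hX); rewrite -h0 mulrCA mulrA.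
have nz : dP * dW != 0 by rewrite e det_inner_block_neq0.
by apply: (mulfI nz); rewrite [RHS]mulrC e -det_char_sandwich // -e mulrAC.
Qed.

End BlockCompanion.

Lemma char_poly_block_companion (S : idomainType) r (m : 'I_r -> nat) p q
    (Hpr : (p <= r)%N) (Hpos : forall i : 'I_r, (i < p)%N = (0 < m i)%N)
    (Hsum : (\sum_(i < r) m i)%N = (p + q)%N) (C : 'M[S]_(p + q)) :
  ends_supported m C -> char_poly (nilJordan S (p + q) m + C) = \det (block_pres_mx Hpr Hpos Hsum C).
Proof.
have [psi [psi_inj psi_inner]] := exists_inner_enum Hpr Hpos Hsum.
exact: (char_poly_ends_supported Hpr Hpos Hsum psi_inj psi_inner).
Qed.

(* [row_at] and [coord_at] return [0] at indices [k >= n], so that nat indices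
   such as [block_offset m i + j] need no bound proof. *)
Definition row_at (R : nmodType) m n (M : 'M[R]_(m, n)) (k : nat) : 'rV[R]_n :=
  if insub k is Some kk then row kk M else 0.

Lemma entry_row (R : Type) m n (M : 'M[R]_(m, n)) i j : M i j = row i M 0 j.
Proof. by rewrite mxE. Qed.

Lemma row_atE (R : nmodType) m n (M : 'M[R]_(m, n)) (kk : 'I_m) : row_at M kk = row kk M.
Proof. by rewrite /row_at valK. Qed.

Section Presentation.
Variables (S : idomainType) (r : nat) (m : 'I_r -> nat) (n : nat) (A B : 'M[S]_n)
  (w : 'I_r -> 'rV[S]_n).
Hypothesis Hsum : (\sum_(i < r) m i)%N = n.
Hypothesis HB : B \in unitmx.
Hypothesis Hrow : forall (i : 'I_r) (k : 'I_n),
  in_block m i k -> row k B = w i *m A ^+ (k - block_offset m i).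
Hypothesis Hw0 : forall i, m i = 0%N -> w i = 0.
Local Notation boff := (block_offset m).

Definition coord_at (x : 'rV[S]_n) (k : nat) : S := if insub k is Some kk then x 0 kk else 0.

Lemma coord_atE x (k : 'I_n) : coord_at x k = x 0 k.
Proof. by rewrite /coord_at valK. Qed.

Lemma coord_atD x y k : coord_at (x + y) k = coord_at x k + coord_at y k.
Proof. by rewrite /coord_at; case: insub => [kk|]; rewrite ?mxE ?addr0. Qed.

Lemma coord_atZ c x k : coord_at (c *: x) k = c * coord_at x k.
Proof. by rewrite /coord_at; case: insub => [kk|]; rewrite ?mxE ?mulr0. Qed.

Lemma coord_at_delta (kk : 'I_n) b : coord_at (delta_mx 0 kk) b = (b == kk :> nat)%:R.
Proof.
rewrite /coord_at; case: insubP => [o _ <-|hb] /=; first by rewrite mxE eqxx /= val_eqE.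
by rewrite (_ : (b == kk :> nat) = false) //; apply: contraNF hb => /eqP ->.
Qed.

Lemma in_block_lt i b : in_block m i b -> (b < n)%N.
Proof.
by case/andP=> _ /leq_trans; apply; rewrite -Hsum -block_offsetS block_offset_le_sum.
Qed.

Lemma chain_row_at (i : 'I_r) j : (j < m i)%N -> w i *m A ^+ j = row_at B (boff i + j).
Proof.
move=> hj; have hi : in_block m i (boff i + j) by rewrite /in_block leq_addr ltn_add2l.
by rewrite /row_at insubT ?(in_block_lt hi) //= => hlt; rewrite (Hrow (i := i) (k := Ordinal hlt)) /= ?addKn.
Qed.

Lemma in_block_unique (b : 'I_n) : exists i0, forall i, in_block m i b = (i == i0).
Proof.
have [i0 h0] : exists i0, in_block m i0 b by apply: exists_block; rewrite Hsum.
by exists i0 => i; apply/idP/eqP => [h|->] //; apply: in_block_uniq h h0.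
Qed.

Definition end_coords (i : 'I_r) : 'rV[S]_n := w i *m A ^+ (m i) *m invmx B.
Definition chain_poly (b : nat) (k : 'I_r) : {poly S} :=
  (in_block m k b)%:R * 'X^(b - boff k).

(* Column [i] records the relation [w_i t^(m_i) = sum_b (end_coords i)_b (row b B)],
   each row of [B] being [w_k t^j] for the block [k] containing it. *)
Definition pres_mx : 'M[{poly S}]_r :=
  \matrix_(k, i) ((k == i)%:R * 'X^(m i) - \sum_(b < n) (end_coords i 0 b)%:P * chain_poly b k).

Definition gen_map (q : 'cV[{poly S}]_r) : 'rV[S]_n := \sum_(i < r) pact A (w i) (q i ord0).

Lemma gen_mapD q1 q2 : gen_map (q1 + q2) = gen_map q1 + gen_map q2.
Proof. by rewrite /gen_map -big_split /=; apply: eq_bigr => i _; rewrite mxE pactD. Qed.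

Lemma gen_mapZ c q : gen_map (c%:P *: q) = c *: gen_map q.
Proof. by rewrite /gen_map scaler_sumr; apply: eq_bigr => i _; rewrite mxE pactCM. Qed.

Lemma gen_map0 : gen_map 0 = 0.
Proof. by rewrite /gen_map big1 // => i _; rewrite mxE pact0. Qed.

Lemma gen_map_sum I (s : seq I) (P : pred I) (F : I -> 'cV[{poly S}]_r) :
  gen_map (\sum_(i <- s | P i) F i) = \sum_(i <- s | P i) gen_map (F i).
Proof. by elim/big_rec2: _ => [|i x y _ <-]; rewrite ?gen_map0 ?gen_mapD. Qed.

Lemma pres_mx_relation i : \sum_(k < r) pact A (w k) (pres_mx k i) = 0.
Proof.
under eq_bigr do rewrite mxE pactD pactN pact_natM pactXn pact_sum.
rewrite sumrB (bigD1 i) //= eqxx scale1r big1 ?addr0; last first.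
  by move=> k /negbTE ->; rewrite scale0r.
rewrite exchange_big /=.
have -> : \sum_(b < n) \sum_(k < r) pact A (w k) ((end_coords i 0 b)%:P * chain_poly b k) =
          \sum_(b < n) end_coords i 0 b *: row b B.
  apply: eq_bigr => b _; have [k0 hk] := in_block_unique b.
  rewrite (bigD1 k0) //= big1 ?addr0 => [|k hk']; rewrite pactCM /chain_poly hk.
    by rewrite eqxx mul1r pactXn -Hrow ?hk.
  by rewrite (negbTE hk') mul0r pact0 scaler0.
by rewrite -mulmx_sum_row /end_coords mulmxKV // subrr.
Qed.

Lemma gen_map_pres q' : gen_map (pres_mx *m q') = 0.
Proof.
rewrite /gen_map; under eq_bigr do rewrite mxE pact_sum.
rewrite exchange_big /=; apply: big1 => i _.
under eq_bigr do rewrite pactM.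
by rewrite -pact_sumv pres_mx_relation pact0v.
Qed.

(* Entry [i] has the coordinates of [u] on [w_i A^j] ([j < m_i]) as coefficients of [t^j]. *)
Definition normal_form (u : 'rV[S]_n) : 'cV[{poly S}]_r :=
  \col_i \sum_(j < m i) (coord_at (u *m invmx B) (boff i + j))%:P * 'X^j.

Lemma normal_formD u v : normal_form (u + v) = normal_form u + normal_form v.
Proof.
apply/matrixP => i j; rewrite !mxE -big_split /=; apply: eq_bigr => k _.
by rewrite mulmxDl coord_atD polyCD mulrDl.
Qed.

Lemma normal_formZ c u : normal_form (c *: u) = c%:P *: normal_form u.
Proof.
apply/matrixP => i j; rewrite !mxE mulr_sumr; apply: eq_bigr => k _.
by rewrite -scalemxAl coord_atZ polyCM mulrA.
Qed.

Lemma normal_form0 : normal_form 0 = 0.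
Proof. by rewrite -(scale0r (0 : 'rV[S]_n)) normal_formZ scale0r. Qed.

Lemma normal_form_sum I (s : seq I) (P : pred I) (F : I -> 'rV[S]_n) :
  normal_form (\sum_(i <- s | P i) F i) = \sum_(i <- s | P i) normal_form (F i).
Proof. by elim/big_rec2: _ => [|i x y _ <-]; rewrite ?normal_form0 ?normal_formD. Qed.

Lemma gen_map_normal_form u : gen_map (normal_form u) = u.
Proof.
rewrite /gen_map; under eq_bigr do rewrite mxE pact_sum.
under eq_bigr do under eq_bigr do rewrite pactCM pactXn chain_row_at //.
rewrite -(sum_by_blocks m (fun b => coord_at (u *m invmx B) b *: row_at B b)) Hsum.
under eq_bigr do rewrite coord_atE row_atE.
by rewrite -mulmx_sum_row mulmxKV.
Qed.

Definition in_pres_image (q : 'cV[{poly S}]_r) := exists q', q = pres_mx *m q'.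

Lemma in_pres_image0 : in_pres_image 0.
Proof. by exists 0; rewrite mulmx0. Qed.

Lemma in_pres_imageD q1 q2 :
  in_pres_image q1 -> in_pres_image q2 -> in_pres_image (q1 + q2).
Proof. by move=> [y1 ->] [y2 ->]; exists (y1 + y2); rewrite mulmxDr. Qed.

Lemma in_pres_imageZ c q : in_pres_image q -> in_pres_image (c *: q).
Proof. by move=> [y ->]; exists (c *: y); rewrite scalemxAr. Qed.

Lemma in_pres_image_sum I (s : seq I) (P : pred I) (F : I -> 'cV[{poly S}]_r) :
  (forall i, P i -> in_pres_image (F i)) -> in_pres_image (\sum_(i <- s | P i) F i).
Proof.
move=> h; elim/big_rec: _ => [|i x Pi gx]; first exact: in_pres_image0.
by apply: in_pres_imageD => //; apply: h.
Qed.

Definition monomial_col (i : 'I_r) (a : nat) : 'cV[{poly S}]_r := 'X^a *: delta_mx i 0.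

Lemma monomial_colE i a k : monomial_col i a k 0 = (k == i)%:R * 'X^a.
Proof. by rewrite !mxE eqxx andbT mulrC. Qed.

Lemma gen_map_monomial i a : gen_map (monomial_col i a) = w i *m A ^+ a.
Proof.
rewrite /gen_map (bigD1 i) //= big1 ?addr0 => [|k hk].
  by rewrite monomial_colE eqxx mul1r pactXn.
by rewrite monomial_colE (negbTE hk) mul0r pact0.
Qed.

Lemma normal_form_defect_lin (I J : finType) y (c : I -> J -> S)
    (z : I -> J -> 'cV[{poly S}]_r) q :
  q = pres_mx *m y + \sum_(b : I) \sum_(k : J) (c b k)%:P *: z b k ->
  q - normal_form (gen_map q) = pres_mx *m y +
    \sum_(b : I) \sum_(k : J) (c b k)%:P *: (z b k - normal_form (gen_map (z b k))).
Proof.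
move=> ->; rewrite gen_mapD gen_map_pres add0r !gen_map_sum normal_form_sum.
under [X in _ - X]eq_bigr do rewrite gen_map_sum normal_form_sum.
under [X in _ - X]eq_bigr do under eq_bigr do rewrite gen_mapZ normal_formZ.
rewrite -addrA; congr (_ + _); rewrite -sumrB; apply: eq_bigr => b _.
by rewrite -sumrB; apply: eq_bigr => k _; rewrite scalerBr.
Qed.

Lemma normal_form_short_monomial i a :
  (a < m i)%N -> normal_form (gen_map (monomial_col i a)) = monomial_col i a.
Proof.
move=> ha; rewrite gen_map_monomial chain_row_at //.
have hlt : (boff i + a < n)%N by apply: (@in_block_lt i); rewrite /in_block leq_addr ltn_add2l.
rewrite /row_at insubT /= /normal_form -row_mul mulmxV // row1.
apply/matrixP => i' z; rewrite (ord1 z) monomial_colE mxE.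
under eq_bigr do rewrite coord_at_delta /=.
have [->|ne] := eqVneq i' i.
  rewrite mul1r (bigD1 (Ordinal ha)) //= eqxx mul1r big1 ?addr0 // => j hj.
  by rewrite eqn_add2l (_ : (j == a :> nat) = false) ?mul0r //; apply/negbTE.
rewrite mul0r big1 // => j _.
have [e|] := eqVneq (boff i' + j)%N (boff i + a)%N; last by rewrite /= mulr0n polyC0 mul0r.
case/eqP: ne; apply: (@in_block_uniq _ m _ _ (boff i + a)).
  by rewrite /in_block -e leq_addr ltn_add2l ltn_ord.
by rewrite /in_block leq_addr ltn_add2l.
Qed.

Lemma monomial_empty_block i a : m i = 0%N ->
  in_pres_image (monomial_col i a - normal_form (gen_map (monomial_col i a))).
Proof.
move=> h; rewrite gen_map_monomial Hw0 // mul0mx normal_form0 subr0.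
exists (monomial_col i a); apply/matrixP => k z; rewrite (ord1 z) {z} [RHS]mxE.
rewrite (bigD1 i) //= big1 ?addr0 => [|k' hk]; last first.
  by rewrite monomial_colE (negbTE hk) mul0r mulr0.
rewrite [monomial_col i a i 0]monomial_colE eqxx mul1r [pres_mx k i]mxE big1 => [|b _].
  by rewrite subr0 h expr0 mulr1 monomial_colE.
by rewrite /end_coords Hw0 // !mul0mx mxE polyC0 mul0r.
Qed.

Lemma monomial_col_decomp i a : (m i <= a)%N -> monomial_col i a =
  pres_mx *m monomial_col i (a - m i) + \sum_(b < n) \sum_(k < r)
    (end_coords i 0 b * (in_block m k b)%:R)%:P *: monomial_col k (b - boff k + (a - m i)).
Proof.
move=> ha; apply/matrixP => k' z; rewrite (ord1 z) {z}.
rewrite [in RHS]mxE [X in _ = _ + X]summxE.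
have inner b : \sum_(k < r) ((end_coords i 0 b * (in_block m k b)%:R)%:P *:
      monomial_col k (b - boff k + (a - m i))) k' 0 =
    (end_coords i 0 b * (in_block m k' b)%:R)%:P * 'X^(b - boff k' + (a - m i)).
  under eq_bigr do rewrite mxE monomial_colE.
  rewrite (bigD1 k') //= eqxx mul1r big1 ?addr0 // => k hk.
  by rewrite eq_sym (negbTE hk) mul0r mulr0.
under [X in _ = _ + X]eq_bigr do rewrite summxE inner.
rewrite [(pres_mx *m _) _ _]mxE (bigD1 i) //= big1 => [|k hk]; last first.
  by rewrite monomial_colE (negbTE hk) mul0r mulr0.
rewrite addr0 [monomial_col i _ i 0]monomial_colE eqxx mul1r [pres_mx k' i]mxE.
rewrite mulrBl mulr_suml.
have -> : \sum_(b < n) (end_coords i 0 b)%:P * chain_poly b k' * 'X^(a - m i) =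
    \sum_(b < n) (end_coords i 0 b * (in_block m k' b)%:R)%:P * 'X^(b - boff k' + (a - m i)).
  by apply: eq_bigr => b _; rewrite /chain_poly polyCM polyC_natr exprD !mulrA.
by rewrite subrK monomial_colE -mulrA -exprD subnKC.
Qed.

Lemma monomial_reduction i a :
  in_pres_image (monomial_col i a - normal_form (gen_map (monomial_col i a))).
Proof.
move: (ltnSn (a + (n - m i))); move: {2}(a + (n - m i)).+1 => N.
elim: N i a => [//|N IH] i a hN.
have [/monomial_empty_block//|hnz] := eqVneq (m i) 0%N.
have [ha|ha] := ltnP a (m i).
  by rewrite normal_form_short_monomial // subrr; apply: in_pres_image0.
rewrite (normal_form_defect_lin (monomial_col_decomp ha)).
apply: in_pres_imageD; first by exists (monomial_col i (a - m i)).
apply: in_pres_image_sum => b _; apply: in_pres_image_sum => k _.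
case hb: (in_block m k b); last by rewrite mulr0 polyC0 scale0r; apply: in_pres_image0.
apply: in_pres_imageZ; apply: IH.
have hk : (boff k + m k <= n)%N by rewrite -Hsum -block_offsetS block_offset_le_sum.
move: hb hk ha hN; rewrite /in_block; lia.
Qed.

Lemma poly_monomial_expand (p : {poly S}) N : (size p <= N)%N ->
  p = \sum_(a < N) (p`_a)%:P * 'X^a.
Proof.
move=> hs; apply/polyP => j; rewrite coef_sum.
under eq_bigr do rewrite coefCM coefXn.
have [hj|hj] := ltnP j N.
  rewrite (bigD1 (Ordinal hj)) //= eqxx mulr1 big1 ?addr0 // => a ha.
  by rewrite eq_sym (_ : (a == j :> nat) = false) ?mulr0 //; apply/negbTE; rewrite -val_eqE in ha.
rewrite big1 ?nth_default ?(leq_trans hs hj) // => a _.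
by rewrite (_ : (j == a :> nat) = false) ?mulr0 // gtn_eqF // (leq_trans (ltn_ord a)).
Qed.

Lemma normal_form_defect q : in_pres_image (q - normal_form (gen_map q)).
Proof.
pose N := (\max_(i < r) size (q i ord0))%N.
have e : q = pres_mx *m 0 + \sum_(i : 'I_r) \sum_(a : 'I_N) ((q i 0)`_a)%:P *: monomial_col i a.
  rewrite mulmx0 add0r; apply/matrixP => k z; rewrite (ord1 z) {z} summxE.
  under eq_bigr do rewrite summxE.
  rewrite (bigD1 k) //= [X in _ = _ + X]big1 ?addr0 => [|i hi]; last first.
    apply: big1 => a _; rewrite mxE monomial_colE.
    by rewrite eq_sym (negbTE hi) mul0r mulr0.
  under eq_bigr do rewrite mxE monomial_colE eqxx mul1r.
  by apply: poly_monomial_expand; apply: (@leq_bigmax _ (fun i => size (q i ord0)) k).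
rewrite (normal_form_defect_lin e); apply: in_pres_imageD; first by exists 0.
apply: in_pres_image_sum => i _; apply: in_pres_image_sum => a _.
by apply: in_pres_imageZ; apply: monomial_reduction.
Qed.

Lemma gen_map_eq0 q : gen_map q = 0 <-> in_pres_image q.
Proof.
split => [h|[q' ->]]; last exact: gen_map_pres.
by have := normal_form_defect q; rewrite h normal_form0 subr0.
Qed.

Lemma gen_map_surj u : exists q, gen_map q = u.
Proof. by exists (normal_form u); apply: gen_map_normal_form. Qed.

Lemma pres_mx_empty_col (k j : 'I_r) : m k = 0%N -> pres_mx j k = (j == k)%:R.
Proof.
move=> h; rewrite mxE h mulr1 big1 ?subr0 // => b _.
by rewrite /end_coords Hw0 // !mul0mx mxE polyC0 mul0r.
Qed.

Lemma pres_mx_empty_row (k j : 'I_r) : m k = 0%N -> pres_mx k j = (k == j)%:R.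
Proof.
move=> h; rewrite mxE big1 ?subr0 => [|b _]; last first.
  by rewrite /chain_poly /in_block h addn0 [(b < _)%N]ltnNge andbN mul0r mulr0.
by case: (eqVneq k j) => [<-|_]; rewrite ?h ?mulr1 ?mul0r.
Qed.

Lemma conj_row_inner (k k' : 'I_n) : k' = k.+1 :> nat -> ~~ block_start m k' ->
  row k (B *m A *m invmx B) = delta_mx 0 k'.
Proof.
move=> ek hk'; have [i hi] : exists i, in_block m i k' by apply: exists_block; rewrite Hsum.
have hik : in_block m i k.
  case/andP: hi; rewrite ek => h1 h2; rewrite /in_block (ltnW h2) andbT.
  move: h1; rewrite leq_eqVlt => /orP[/eqP eoff|//].
  by move: hk'; rewrite ek -eoff block_start_offset // ltnW.
rewrite !row_mul (Hrow hik) -(mulmxA (w i)) mulmxE -exprSr -subSn; last by case/andP: hik.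
by rewrite -ek -(Hrow hi) -row_mul mulmxV // row1.
Qed.

Lemma conj_row_end (i : 'I_r) (k : 'I_n) : (0 < m i)%N -> k.+1 = (boff i + m i)%N ->
  row k (B *m A *m invmx B) = end_coords i.
Proof.
move=> hm ek; have hik : in_block m i k.
  by rewrite /in_block -ek ltnSn andbT -ltnS ek -{1}[boff i]addn0 ltn_add2l.
by rewrite !row_mul (Hrow hik) -(mulmxA (w i)) mulmxE -exprSr -subSn ?ek ?addKn //; case/andP: hik.
Qed.

Lemma pres_mx_cofactor (f : {poly S}) : (forall v, pact A v f = 0) ->
  exists Y, pres_mx *m Y = f%:M.
Proof.
move=> Hf; have hy i : exists y, f *: (delta_mx i 0 : 'cV[{poly S}]_r) = pres_mx *m y.
  apply/gen_map_eq0; rewrite /gen_map (bigD1 i) //= big1 ?addr0 => [|k hk].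
    by rewrite !mxE eqxx mulr1 Hf.
  by rewrite !mxE (negbTE hk) mulr0 pact0.
have [yf hyf] := fin_all_exists hy.
exists (\matrix_(k, i) yf i k 0); apply/matrixP => a i.
transitivity ((pres_mx *m yf i) a 0); first by rewrite !mxE; apply: eq_bigr => k _; rewrite mxE.
by rewrite -hyf !mxE eqxx andbT mulr_natr.
Qed.

Lemma conj_ends_supported : ends_supported m (B *m A *m invmx B - nilJordan S n m).
Proof.
move=> k hk j; have hk1 : (k.+1 < n)%N.
  rewrite ltn_neqAle ltn_ord andbT; apply: contraNneq hk => ->.
  by rewrite -Hsum -(block_offset_ge m (leqnn r)) block_start_offset.
rewrite [X in X = _]mxE [(- nilJordan _ _ _) _ _]mxE (entry_row (B *m A *m _)).
rewrite (conj_row_inner (k' := Ordinal hk1)) // !mxE /= -val_eqE /=.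
by case: eqP => [->|]; rewrite ?hk ?subrr.
Qed.

Lemma conj_end_entry (i : 'I_r) (k : 'I_n) b : (0 < m i)%N -> k.+1 = (boff i + m i)%N ->
  (B *m A *m invmx B - nilJordan S n m) k b = end_coords i 0 b.
Proof.
move=> hm ek; have bsk : block_start m k.+1.
  by rewrite ek -block_offsetS block_start_offset.
rewrite [X in X = _]mxE [(- nilJordan _ _ _) _ _]mxE [nilJordan _ _ _ _ _]mxE.
rewrite (entry_row (B *m A *m _)) (conj_row_end hm ek).
by case: eqP => [->|]; rewrite ?bsk subr0.
Qed.

Variables (F : nzRingType) (pi : {rmorphism S -> F}).

Lemma map_pres_mx : (forall i, map_mx pi (w i *m A ^+ m i) = 0) ->
  map_mx (map_poly pi) pres_mx = \matrix_(i, j) ((i == j)%:R * 'X^(m i)).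
Proof.
move=> Hend; apply/matrixP => k i.
have hc b : pi (end_coords i 0 b) = 0.
  have /matrixP/(_ 0 b) : map_mx pi (end_coords i) = 0.
    by rewrite /end_coords map_mxM Hend mul0mx.
  by rewrite mxE => ->; rewrite mxE.
rewrite mxE [in RHS]mxE [pres_mx k i]mxE rmorphB rmorph_sum /= big1 => [|b _].
  rewrite subr0 rmorphM /= rmorph_nat map_polyXn.
  by case: (eqVneq k i) => [->|]; rewrite ?mul0r.
by rewrite rmorphM /= map_polyC /= hc polyC0 mul0r.
Qed.

End Presentation.

Lemma exists_nz_prefix r (m : 'I_r -> nat) :
  (forall i j : 'I_r, (i <= j)%N -> (m j <= m i)%N) ->
  exists2 p, (p <= r)%N & forall i : 'I_r, (i < p)%N = (0 < m i)%N.
Proof.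
move=> Hdec; pose zero_at k := (r <= k)%N || [exists i : 'I_r, (i == k :> nat) && (m i == 0%N)].
have zero_at_r : zero_at r by rewrite /zero_at leqnn.
have [p Hp Hmin] := ex_minnP (ex_intro zero_at r zero_at_r).
exists p; first by apply: Hmin; rewrite /zero_at leqnn.
move=> i; apply/idP/idP => h.
  rewrite lt0n; apply: contraTneq h => hm; rewrite -leqNgt; apply: Hmin.
  by apply/orP; right; apply/existsP; exists i; rewrite eqxx hm.
rewrite ltnNge; apply: contraTN h => hle.
case/orP: Hp => [hr|/existsP[i0 /andP[/eqP e0 /eqP m0]]].
  by move: (leq_trans hr hle); rewrite leqNgt ltn_ord.
by have := Hdec i0 i; rewrite e0 hle m0 leqn0 => /(_ isT)/eqP ->.
Qed.

Lemma leq_nz_prefix_sum r (m : 'I_r -> nat) p :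
  (p <= r)%N -> (forall i : 'I_r, (i < p)%N = (0 < m i)%N) -> (p <= \sum_(i < r) m i)%N.
Proof.
move=> Hpr Hpos; rewrite (bigID (fun i : 'I_r => (i < p)%N)) /=.
apply: leq_trans (leq_addr _ _).
have : (\sum_(i < r | (i < p)%N) 1 <= \sum_(i < r | (i < p)%N) m i)%N.
  by apply: leq_sum => i; rewrite Hpos.
by apply: leq_trans; rewrite (big_ord_narrow Hpr) sum1_card card_ord.
Qed.

(* [B] conjugates [A] into [nilJordan + C], with [C] supported on the last rows of
   the blocks, where it holds the coordinates of [w_i A^(m_i)]. *)
Lemma det_pres_mx (S : idomainType) r (m : 'I_r -> nat) n (A B : 'M[S]_n)
    (w : 'I_r -> 'rV[S]_n) :
  (forall i j : 'I_r, (i <= j)%N -> (m j <= m i)%N) ->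
  (\sum_(i < r) m i)%N = n -> B \in unitmx ->
  (forall i (k : 'I_n), in_block m i k -> row k B = w i *m A ^+ (k - block_offset m i)) ->
  (forall i, m i = 0%N -> w i = 0) ->
  \det (pres_mx m A B w) = char_poly A.
Proof.
move=> Hdec Hsum HB Hrow Hw0; have [p Hpr Hpos] := exists_nz_prefix Hdec.
have [q en] : exists q, n = (p + q)%N.
  by exists (n - p)%N; rewrite subnKC // -Hsum leq_nz_prefix_sum.
move: A B w HB Hrow Hw0 Hsum; rewrite {n}en => A B w HB Hrow Hw0 Hsum.
set J := nilJordan S (p + q) m.
have Clast i b : (B *m A *m invmx B - J) (block_last Hpr Hpos Hsum i) b =
    end_coords m A B w (nz_block Hpr i) 0 b.
  by rewrite (conj_end_entry Hrow _ (nz_block_gt0 Hpr Hpos i)) // block_last_succ block_offsetS.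
rewrite -(char_poly_conj A HB) -[B *m A *m _](subrK J) addrC.
rewrite char_poly_block_companion; last exact: conj_ends_supported Hsum HB Hrow.
rewrite -det_tr (det_widen_identity Hpr) => [|i j hij].
  congr (\det _); apply/matrixP => i j; rewrite [in RHS]mxE.
  rewrite (eq_bigr (fun b => (end_coords m A B w (nz_block Hpr i) 0 b)%:P *
    chain_mx S m q Hpr b j)) => [|b _]; last by rewrite Clast.
  rewrite !mxE -(nz_block_eq Hpr i j) eq_sym; congr (_ - _).
  by apply: eq_bigr => b _; rewrite [chain_mx _ _ _ _ _ _]mxE.
have mz (k : 'I_r) : (p <= k)%N -> m k = 0%N by rewrite leqNgt Hpos lt0n negbK => /eqP.
rewrite mxE; case/orP: hij => /mz h; first by rewrite (pres_mx_empty_col A B Hw0) // eq_sym.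
by rewrite (pres_mx_empty_row A B w) // eq_sym.
Qed.

Lemma mulmx_scalar_sym (R : idomainType) r (X Y : 'M[R]_r) a :
  \det X != 0 -> X *m Y = a%:M -> Y *m X = a%:M.
Proof.
move=> dX XY; apply/eqP; rewrite -subr_eq0; apply/eqP.
have XZ : X *m (Y *m X - a%:M) = 0.
  by rewrite mulmxBr mulmxA XY mul_scalar_mx mul_mx_scalar subrr.
have /matrixP h : \adj X *m (X *m (Y *m X - a%:M)) = 0 by rewrite XZ mulmx0.
apply/matrixP => i j; move: (h i j); rewrite mulmxA mul_adj_mx mul_scalar_mx !mxE.
by move/eqP; rewrite mulf_eq0 (negbTE dX) => /eqP.
Qed.

Section ResidueUnits.
Variables (S : idomainType) (F : fieldType) (pi : {rmorphism S -> F}) (l : S).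
Hypothesis pi_l : pi l = 0.
Hypothesis Hdvr : forall a : S, a != 0 -> exists k u, u \is a GRing.unit /\ a = u * l ^+ k.

Lemma unit_of_residue a : pi a != 0 -> a \is a GRing.unit.
Proof.
move=> ha; have [|[|k] [u [hu e]]] := Hdvr (a := a); first by apply: contraNneq ha => ->; rewrite rmorph0.
  by rewrite e expr0 mulr1.
by move: ha; rewrite e rmorphM rmorphXn pi_l expr0n mulr0 eqxx.
Qed.

Lemma unitmx_of_residue n (B : 'M[S]_n) : map_mx pi B \in unitmx -> B \in unitmx.
Proof. by rewrite !unitmxE unitfE det_map_mx; apply: unit_of_residue. Qed.

End ResidueUnits.

Section JordanLift.
Variables (S : comNzRingType) (F : nzRingType) (pi : {rmorphism S -> F}).
Hypothesis pi_surj : forall y : F, exists a : S, pi a = y.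
Variables (n r : nat) (m : 'I_r -> nat) (A : 'M[S]_n) (P : 'M[F]_n).
Hypothesis HP : P *m map_mx pi A = nilJordan F n m *m P.
Hypothesis Hsum : (\sum_(i < r) m i)%N = n.
Local Notation bs := (block_start m).

Lemma exists_lift_mx : exists L : 'M[S]_n, map_mx pi L = P.
Proof.
have pi_surjb y : exists a, pi a == y by have [a ha] := pi_surj y; exists a; apply/eqP.
exists (\matrix_(i, j) xchoose (pi_surjb (P i j))).
by apply/matrixP => i j; rewrite !mxE; apply/eqP; exact: xchooseP (pi_surjb (P i j)).
Qed.

(* Lift the Jordan chains of [P] to [S]: rows at block starts are lifted
   arbitrarily, the others are obtained from the previous one by applying [A]. *)
Lemma jordan_chain_lift : exists (B : 'M[S]_n) (w : 'I_r -> 'rV[S]_n),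
  [/\ map_mx pi B = P,
      forall i (k : 'I_n), in_block m i k -> row k B = w i *m A ^+ (k - block_offset m i),
      forall i, map_mx pi (w i *m A ^+ m i) = 0 &
      forall i, m i = 0%N -> w i = 0].
Proof.
have [L mapL] := exists_lift_mx.
pose b := fix b (k : nat) : 'rV[S]_n := match k with
  | 0 => row_at L 0
  | k'.+1 => if bs k'.+1 then row_at L k'.+1 else b k' *m A end.
have bP k : (k < n)%N -> map_mx pi (b k) = row_at P k.
  elim: k => [|k IH] hk; first by rewrite /= /row_at insubT //= map_row mapL.
  rewrite /=; case: ifP => hbs.
    by rewrite /row_at insubT //= map_row mapL.
  have hk' : (k < n)%N := ltnW hk.
  rewrite map_mxM IH // (row_atE _ (Ordinal hk')) -row_mul HP.
  by rewrite (row_nilJordan_mul _ (k' := Ordinal hk)) ?hbs // -(row_atE _ (Ordinal hk)).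
pose w i := if (0 < m i)%N then b (block_offset m i) else 0.
have bw (i : 'I_r) j : (j < m i)%N -> b (block_offset m i + j)%N = w i *m A ^+ j.
  elim: j => [|j IH] hj; first by rewrite addn0 /w (leq_trans _ hj) // expr0 mulmx1.
  rewrite addnS /= ifN; first by rewrite IH 1?ltnW // exprSr mulmxA.
  by apply: (not_block_start_inner (i := i)); rewrite ltnS leq_addr -addnS ltn_add2l.
exists (\matrix_(k < n) b k), w; split.
- by apply/row_matrixP => k; rewrite -map_row rowK bP // row_atE.
- move=> i k /andP[h1 h2]; rewrite rowK -bw ?subnKC //.
  by rewrite ltn_subLR.
- move=> i; have [h0|hm] := posnP (m i); first by rewrite /w h0 mul0mx map_mx0.
  have hl : (block_offset m i + (m i).-1 < n)%N.
    by rewrite -Hsum (leq_trans _ (block_offset_le_sum m i.+1)) // block_offsetS ltn_add2l prednK.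
  rewrite -[m i]prednK // exprSr mulmxA -bw ?prednK // map_mxM bP //.
  rewrite (row_atE _ (Ordinal hl)) -row_mul HP row_nilJordan_mul_end //=.
  by rewrite -addnS prednK // -block_offsetS block_start_offset.
- by move=> i hm; rewrite /w hm.
Qed.

End JordanLift.

Theorem mainTheorem11
  (S : idomainType) (l : nat) (F : finFieldType) (pi : {rmorphism S -> F})
  (HS : @unram_int_ring S l F pi)
  (d1 : nat) (f1 : {poly S})
  (Hf1m : f1 \is monic) (Hf1s : size f1 = d1.+1)
  (Hf1l : map_poly pi f1 = 'X^d1)
  (n : nat) (A : 'M[S]_n)
  (HA : forall v : 'rV[S]_n, pact A v f1 = 0)
  (r : nat) (v : 'I_r -> 'rV[S]_n)
  (Hgen : forall w : 'rV[S]_n, exists p : 'I_r -> {poly S},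
            w = \sum_(i < r) pact A (v i) (p i))
  (m : 'I_r -> nat)
  (Hm : @Hp F n r (map_mx pi A) m) :
  exists (X Y : 'M[{poly S}]_r),
    [/\ Y *m X = f1%:M,
        \det X = char_poly A,
        (exists w : 'I_r -> 'rV[S]_n,
           let phi := fun q : 'cV[{poly S}]_r =>
                        \sum_(i < r) pact A (w i) (q i ord0) in
           (forall u : 'rV[S]_n, exists q, phi q = u) /\
           (forall q : 'cV[{poly S}]_r,
              phi q = 0 <-> exists q' : 'cV[{poly S}]_r, q = X *m q')) &
        map_mx (map_poly pi) X =
          \matrix_(i < r, j < r) ((i == j)%:R * 'X^(m i))].
Proof.
case: HS => _ _ [Hdvr pi_surj pi_ker _]; case: Hm => Hdec Hsum [P [Punit HP]].
have pi_l : pi l%:R = 0 by apply/pi_ker; exists 1; rewrite mul1r expr1.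
have HP' : P *m map_mx pi A = nilJordan F n m *m P by rewrite -HP mulmxKV.
have [B [w [mapB Hrow Hend Hw0]]] := jordan_chain_lift pi_surj HP' Hsum.
have HB : B \in unitmx by apply: (unitmx_of_residue pi_l Hdvr); rewrite mapB.
have detX := det_pres_mx Hdec Hsum HB Hrow Hw0.
have [Y XY] := pres_mx_cofactor Hsum HB Hrow Hw0 HA.
exists (pres_mx m A B w), Y; split => //.
- by apply: mulmx_scalar_sym XY; rewrite detX monic_neq0 ?char_poly_monic.
- exists w => phi; split; first exact: gen_map_surj Hsum HB Hrow.
  by move=> q; apply: gen_map_eq0 Hsum HB Hrow Hw0 q.
- exact: map_pres_mx.
Qed.
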